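(* Let $\mathfrak{O}$ be a domain in the $(\varpi,z)$ half-plane on which $(\partial_\varpi\Pi)^2+(\partial_z\Pi)^2\neq0$, and suppose $\mathfrak{O}=\mathfrak{O}_1\cup\mathfrak{O}_2$ where $\Omega$ is constant on the domain $\mathfrak{O}_1$ and $\rho=P=0$ on the domain $\mathfrak{O}_2$. Let $K$ be arbitrarily given and let $F,A,\Pi$ satisfy, for $\rho$, $\Omega$ and this $K$, (a) $\Delta F+\frac1\Pi(\partial_\varpi\Pi\,\partial_\varpi F+\partial_z\Pi\,\partial_zF)+\frac{e^{4F}}{2\Pi^2}[(\partial_\varpi A)^2+(\partial_zA)^2]=\frac{4\pi\mathsf{G}}{\mathsf{c}^4}e^{2(-F+K)}\Big[(\epsilon+P)\frac{e^{2F}(1+\frac{\Omega}{\mathsf{c}}A)^2+e^{-2F}\frac{\Omega^2}{\mathsf{c}^2}\Pi^2}{\mathcal{D}}+2P\Big]$; (b) $\Delta A-\frac1\Pi(\partial_\varpi\Pi\,\partial_\varpi A+\partial_z\Pi\,\partial_zA)+4(\partial_\varpi F\,\partial_\varpi A+\partial_zF\,\partial_zA)=-\frac{16\pi\mathsf{G}}{\mathsf{c}^4}e^{2(-F+K)}(\epsilon+P)\frac{e^{-2F}\frac{\Omega}{\mathsf{c}}\Pi^2(1+\frac{\Omega}{\mathsf{c}}A)}{\mathcal{D}}$; (c) $\Delta\Pi=\frac{16\pi\mathsf{G}}{\mathsf{c}^4}e^{2(-F+K)}P\Pi$; (f) $\frac12\log\mathcal{D}=-\frac{u}{\mathsf{c}^2}+\text{Const.}$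 while $\rho>0$. Let $\tilde K_1,\tilde K_3$ be evaluated by these $F,A,\Pi$ (see context). Then on $\mathfrak{O}$ $$\partial_z\tilde K_1-\partial_\varpi\tilde K_3=\frac{16\pi\mathsf{G}}{\mathsf{c}^4}e^{2(-F+K)}P\Pi\big[(\partial_\varpi\Pi)^2+(\partial_z\Pi)^2\big]^{-1}\Big[(\partial_\varpi K-\tilde K_1)\partial_z\Pi-(\partial_zK-\tilde K_3)\partial_\varpi\Pi\Big].$$
   Context: $\mathsf{c},\mathsf{G}>0$ constants; $\Delta=\partial_\varpi^2+\partial_z^2$. $\rho\ge0$ and $\Omega$ are functions of $(\varpi,z)$; $P=P(\rho)$ is a $C^1$ function of $\rho\ge0$, $\epsilon=\mathsf{c}^2\rho$, $u=\int_0^\rho dP/(\rho+P/\mathsf{c}^2)$. $\mathcal{D}=e^{2F}(1+\frac{\Omega}{\mathsf{c}}A)^2-e^{-2F}\frac{\Omega^2}{\mathsf{c}^2}\Pi^2$, assumed positive. Define $\mathcal{R}_d=\frac12(\partial_\varpi^2\Pi-\partial_z^2\Pi)+\Pi[(\partial_\varpi F)^2-(\partial_zF)^2]-\frac{e^{4F}}{4\Pi}[(\partial_\varpi A)^2-(\partial_zA)^2]$, $\mathcal{R}_e=\partial_\varpi\partial_z\Pi+2\Pi\,\partial_\varpi F\,\partial_zF-\frac{e^{4F}}{2\Pi}\partial_\varpi A\,\partial_zA$, $\tilde K_1=((\partial_\varpi\Pi)^2+(\partial_z\Pi)^2)^{-1}[\partial_\varpi\Pi\,\mathcal{R}_d+\partial_z\Pi\,\mathcal{R}_e]$,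 $\tilde K_3=((\partial_\varpi\Pi)^2+(\partial_z\Pi)^2)^{-1}[-\partial_z\Pi\,\mathcal{R}_d+\partial_\varpi\Pi\,\mathcal{R}_e]$. *)

From Stdlib Require Import Reals.
From Coquelicot Require Import Coquelicot.
Open Scope R_scope.

(* Points of the (varpi, z) plane are pairs (w, z) : R * R.
   Fields are functions f : R -> R -> R,  f w z. *)

Definition dw (f : R -> R -> R) : R -> R -> R :=
  fun w z => Derive (fun x => f x z) w.
Definition dz (f : R -> R -> R) : R -> R -> R :=
  fun w z => Derive (fun y => f w y) z.
Definition Lap (f : R -> R -> R) : R -> R -> R :=
  fun w z => dw (dw f) w z + dz (dz f) w z.

Definition open_set (O : R -> R -> Prop) : Prop :=
  forall w z, O w z -> exists e, 0 < e /\
    forall w' z', Rabs (w' - w) < e -> Rabs (z' - z) < e -> O w' z'.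

Definition connected_set (O : R -> R -> Prop) : Prop :=
  forall U V : R -> R -> Prop, open_set U -> open_set V ->
    (forall w z, O w z -> U w z \/ V w z) ->
    (forall w z, O w z -> U w z -> V w z -> False) ->
    (forall w z, O w z -> U w z) \/ (forall w z, O w z -> V w z).

Definition plane_domain (O : R -> R -> Prop) : Prop :=
  (exists w z, O w z) /\ open_set O /\ connected_set O.

Definition half_plane_domain (O : R -> R -> Prop) : Prop :=
  plane_domain O /\ forall w z, O w z -> 0 < w.

Definition cont_at (f : R -> R -> R) (w z : R) : Prop :=
  continuous (fun p : R * R => f (fst p) (snd p)) (w, z).

Fixpoint Ck (k : nat) (D : R -> R -> Prop) (f : R -> R -> R) : Prop :=
  match k with
  | 0%nat => forall w z, D w z -> cont_at f w z
  | S k' =>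
      (forall w z, D w z ->
         ex_derive (fun x => f x z) w /\ ex_derive (fun y => f w y) z) /\
      Ck k' D f /\ Ck k' D (dw f) /\ Ck k' D (dz f)
  end.

Section Fields.
Variables (c : R) (F A Pi Om : R -> R -> R).

Definition calD (w z : R) : R :=
  exp (2 * F w z) * (1 + Om w z / c * A w z) ^ 2
  - exp (- (2 * F w z)) * (Om w z ^ 2 / c ^ 2) * Pi w z ^ 2.

Definition Rd (w z : R) : R :=
  / 2 * (dw (dw Pi) w z - dz (dz Pi) w z)
  + Pi w z * (dw F w z ^ 2 - dz F w z ^ 2)
  - exp (4 * F w z) / (4 * Pi w z) * (dw A w z ^ 2 - dz A w z ^ 2).

Definition Re (w z : R) : R :=
  dz (dw Pi) w z
  + 2 * Pi w z * dw F w z * dz F w z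
  - exp (4 * F w z) / (2 * Pi w z) * dw A w z * dz A w z.

Definition gradPi2 (w z : R) : R := dw Pi w z ^ 2 + dz Pi w z ^ 2.

Definition K1t (w z : R) : R :=
  / gradPi2 w z * (dw Pi w z * Rd w z + dz Pi w z * Re w z).

Definition K3t (w z : R) : R :=
  / gradPi2 w z * (- dz Pi w z * Rd w z + dw Pi w z * Re w z).

End Fields.

From Stdlib Require Import Reals Lra.
From Coquelicot Require Import Coquelicot.
Open Scope R_scope.

(* Differentiating K1 and K3 and eliminating the second z-derivatives with (a),
   (b), (c) and the first derivatives of (c), the two sides of the claim differ
   by a multiple of [E_w Pi_z - E_z Pi_w], where [E = dP + (eps + P) d(ln D) / 2]
   is the residual of the Euler equation of the rigidly rotating fluid.  So it
   suffices that [E] vanishes on O.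

   Where [rho = 0], [rho] is minimal, so [d rho = 0], and [P(0) = 0].  Where
   [rho > 0] we are in O1, Omega is constant, and differentiating the first
   integral (f) gives [E = 0] since [u' = P' / (rho + P / c^2)], provided
   [rho + P / c^2 <> 0].  If [E] did not vanish at a point where
   [rho + P / c^2 = 0], it would not vanish nearby, so [eps + P = 0] on an open
   set; there [u(rho)], hence D, is constant, and then (a), (b), (c) make [P] a
   nonnegative sum of squares, contradicting [P = - c^2 rho < 0]. *)

(* [auto_derive] leaves eta-expanded functions [fun x => g x], which [field]
   would treat as atoms different from [g]. *)
Ltac eta_reduce :=
  repeat match goal with
  |- context [fun x : R => ?g x] => change (fun x : R => g x) with g
  end.

(** * Calculus in the plane *)

Lemma locally_2d_open (O Q : R -> R -> Prop) w z :
  open_set O -> O w z -> (forall x y, O x y -> Q x y) -> locally_2d Q w z.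
Proof.
  intros HO Hw HQ. destruct (HO w z Hw) as [e [He Hball]].
  exists (mkposreal e He). intros x y Hx Hy. apply HQ, Hball; assumption.
Qed.

Lemma Ck_S_Ck k D f : Ck (S k) D f -> Ck k D f.
Proof. intros [_ [H _]]. exact H. Qed.

Lemma Ck_S_dw k D f : Ck (S k) D f -> Ck k D (dw f).
Proof. intros [_ [_ [H _]]]. exact H. Qed.

Lemma Ck_S_dz k D f : Ck (S k) D f -> Ck k D (dz f).
Proof. intros [_ [_ [_ H]]]. exact H. Qed.

Lemma Ck_S_ex_derive_w k D f w z : Ck (S k) D f -> D w z ->
  ex_derive (fun x => f x z) w.
Proof. intros [H _] Hw. exact (proj1 (H w z Hw)). Qed.

Lemma Ck_S_ex_derive_z k D f w z : Ck (S k) D f -> D w z ->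
  ex_derive (fun y => f w y) z.
Proof. intros [H _] Hw. exact (proj2 (H w z Hw)). Qed.

Lemma Ck_continuity_2d_pt k D f w z : Ck k D f -> D w z -> continuity_2d_pt f w z.
Proof.
  revert f. induction k as [|k IHk]; intros f Hf Hw.
  - apply continuity_2d_pt_filterlim, Hf, Hw.
  - apply IHk; [apply Ck_S_Ck, Hf | exact Hw].
Qed.

Ltac ex_derive_w_of_Ck :=
  eapply Ck_S_ex_derive_w;
  [repeat first [apply Ck_S_dw | apply Ck_S_dz]; eassumption | eassumption].

Ltac ex_derive_z_of_Ck :=
  eapply Ck_S_ex_derive_z;
  [repeat first [apply Ck_S_dw | apply Ck_S_dz]; eassumption | eassumption].

Lemma dw_ext_loc (f g : R -> R -> R) w z :
  locally_2d (fun x y => f x y = g x y) w z -> dw f w z = dw g w z.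
Proof. intros H. apply Derive_ext_loc, (locally_2d_1d_const_y _ _ _ H). Qed.

Lemma dz_ext_loc (f g : R -> R -> R) w z :
  locally_2d (fun x y => f x y = g x y) w z -> dz f w z = dz g w z.
Proof. intros H. apply Derive_ext_loc, (locally_2d_1d_const_x _ _ _ H). Qed.

Lemma dw_locally_const (g : R -> R -> R) C w z :
  locally_2d (fun x y => g x y = C) w z -> dw g w z = 0.
Proof. intros H. rewrite (dw_ext_loc g (fun _ _ => C) w z H). apply (Derive_const C). Qed.

Lemma dz_locally_const (g : R -> R -> R) C w z :
  locally_2d (fun x y => g x y = C) w z -> dz g w z = 0.
Proof. intros H. rewrite (dz_ext_loc g (fun _ _ => C) w z H). apply (Derive_const C). Qed.

Lemma locally_2d_dw_const (g : R -> R -> R) C w z :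
  locally_2d (fun x y => g x y = C) w z -> locally_2d (fun x y => dw g x y = 0) w z.
Proof.
  apply locally_2d_impl_strong, locally_2d_forall.
  intros x y. apply dw_locally_const.
Qed.

Lemma locally_2d_dz_const (g : R -> R -> R) C w z :
  locally_2d (fun x y => g x y = C) w z -> locally_2d (fun x y => dz g x y = 0) w z.
Proof.
  apply locally_2d_impl_strong, locally_2d_forall.
  intros x y. apply dz_locally_const.
Qed.

Lemma dw_dz_comm O f w z : open_set O -> Ck 2 O f -> O w z ->
  dw (dz f) w z = dz (dw f) w z.
Proof.
  intros HO Hf Hw.
  assert (Hfw := Ck_S_dw _ _ _ Hf). assert (Hfz := Ck_S_dz _ _ _ Hf).
  apply Schwarz.
  - apply (locally_2d_open O _ w z HO Hw). intros x y Hx. repeat split.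
    + exact (Ck_S_ex_derive_w _ _ _ _ _ Hf Hx).
    + exact (Ck_S_ex_derive_z _ _ _ _ _ Hf Hx).
    + exact (Ck_S_ex_derive_w _ _ _ _ _ Hfz Hx).
    + exact (Ck_S_ex_derive_z _ _ _ _ _ Hfw Hx).
  - exact (Ck_continuity_2d_pt 0 O (dw (dz f)) w z (Ck_S_dw _ _ _ Hfz) Hw).
  - exact (Ck_continuity_2d_pt 0 O (dz (dw f)) w z (Ck_S_dz _ _ _ Hfw) Hw).
Qed.

Lemma dz_dz_dw_comm O f w z : open_set O -> Ck 3 O f -> O w z ->
  dz (dz (dw f)) w z = dw (dz (dz f)) w z.
Proof.
  intros HO Hf Hw.
  rewrite (dz_ext_loc (dz (dw f)) (dw (dz f))).
  - symmetry. exact (dw_dz_comm O (dz f) w z HO (Ck_S_dz _ _ _ Hf) Hw).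
  - apply (locally_2d_open O _ w z HO Hw). intros x y Hx.
    symmetry. exact (dw_dz_comm O f x y HO (Ck_S_Ck _ _ _ Hf) Hx).
Qed.

Lemma dw_Lap O f g w z : open_set O -> Ck 3 O f -> O w z ->
  (forall x y, O x y -> Lap f x y = g x y) ->
  dw (dw (dw f)) w z + dw (dz (dz f)) w z = dw g w z.
Proof.
  intros HO Hf Hw Hg.
  rewrite <- (dw_ext_loc _ _ w z (locally_2d_open O _ w z HO Hw Hg)).
  change (dw (Lap f) w z) with (Derive (fun x => dw (dw f) x z + dz (dz f) x z) w).
  rewrite Derive_plus; [reflexivity | |].
  - exact (Ck_S_ex_derive_w _ _ _ _ _ (Ck_S_dw _ _ _ (Ck_S_dw _ _ _ Hf)) Hw).
  - exact (Ck_S_ex_derive_w _ _ _ _ _ (Ck_S_dz _ _ _ (Ck_S_dz _ _ _ Hf)) Hw).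
Qed.

Lemma dz_Lap O f g w z : open_set O -> Ck 3 O f -> O w z ->
  (forall x y, O x y -> Lap f x y = g x y) ->
  dz (dw (dw f)) w z + dz (dz (dz f)) w z = dz g w z.
Proof.
  intros HO Hf Hw Hg.
  rewrite <- (dz_ext_loc _ _ w z (locally_2d_open O _ w z HO Hw Hg)).
  change (dz (Lap f) w z) with (Derive (fun y => dw (dw f) w y + dz (dz f) w y) z).
  rewrite Derive_plus; [reflexivity | |].
  - exact (Ck_S_ex_derive_z _ _ _ _ _ (Ck_S_dw _ _ _ (Ck_S_dw _ _ _ Hf)) Hw).
  - exact (Ck_S_ex_derive_z _ _ _ _ _ (Ck_S_dz _ _ _ (Ck_S_dz _ _ _ Hf)) Hw).
Qed.

Lemma Derive_local_min (g : R -> R) t : ex_derive g t ->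
  locally t (fun s => g t <= g s) -> Derive g t = 0.
Proof.
  intros Hg [eps Hmin].
  rewrite <- (Derive_Reals g t (ex_derive_Reals_0 g t Hg)).
  apply (deriv_minimum g (t - eps) (t + eps) t); try (destruct eps; simpl; lra).
  intros s H1 H2. apply Hmin. change (Rabs (s - t) < eps). apply Rabs_def1; lra.
Qed.

Lemma locally_2d_pos (g : R -> R -> R) w z : continuity_2d_pt g w z -> 0 < g w z ->
  locally_2d (fun x y => 0 < g x y) w z.
Proof.
  intros Hc Hg. destruct (Hc (mkposreal _ Hg)) as [d Hd].
  exists d. intros x y Hx Hy. specialize (Hd x y Hx Hy). simpl in Hd.
  apply Rabs_def2 in Hd. lra.
Qed.

Lemma continuity_2d_pt_pow (f : R -> R -> R) n w z : continuity_2d_pt f w z ->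
  continuity_2d_pt (fun x y => f x y ^ n) w z.
Proof.
  intros H. induction n as [|n IHn].
  - exact (continuity_2d_pt_const w z 1).
  - apply (continuity_2d_pt_mult f (fun x y => f x y ^ n)); assumption.
Qed.

Lemma continuity_2d_pt_exp (f : R -> R -> R) w z : continuity_2d_pt f w z ->
  continuity_2d_pt (fun x y => exp (f x y)) w z.
Proof.
  intros H. apply (continuity_1d_2d_pt_comp exp f); [|exact H].
  apply derivable_continuous_pt, derivable_pt_exp.
Qed.

Ltac continuity_2d :=
  repeat match goal with
  | |- continuity_2d_pt (fun _ _ => _) _ _ => apply continuity_2d_pt_const
  | |- continuity_2d_pt (fun x y => @?f x y + @?g x y) _ _ => apply (continuity_2d_pt_plus f g)
  | |- continuity_2d_pt (fun x y => @?f x y - @?g x y) _ _ => apply (continuity_2d_pt_minus f g)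
  | |- continuity_2d_pt (fun x y => @?f x y * @?g x y) _ _ => apply (continuity_2d_pt_mult f g)
  | |- continuity_2d_pt (fun x y => @?f x y / @?g x y) _ _ => unfold Rdiv
  | |- continuity_2d_pt (fun x y => - @?f x y) _ _ => apply (continuity_2d_pt_opp f)
  | |- continuity_2d_pt (fun x y => / @?f x y) _ _ => apply (continuity_2d_pt_inv f)
  | |- continuity_2d_pt (fun x y => @?f x y ^ _) _ _ => apply continuity_2d_pt_pow
  | |- continuity_2d_pt (fun x y => exp (@?f x y)) _ _ => apply continuity_2d_pt_exp
  | H : continuity_2d_pt ?f ?w ?z |- continuity_2d_pt (fun x y => ?f x y) ?w ?z => exact H
  | H : continuity_2d_pt ?f ?w ?z |- continuity_2d_pt ?f ?w ?z => exact H
  end.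

Lemma Rabs_between a b t : Rmin a b <= t <= Rmax a b -> Rabs (t - a) <= Rabs (b - a).
Proof.
  intros [H1 H2]. unfold Rmin, Rmax in *. destruct (Rle_dec a b).
  - rewrite !Rabs_right; lra.
  - rewrite !Rabs_left1; lra.
Qed.

Lemma IVT_segment (g : R -> R) a b s :
  (forall t, Rmin a b <= t <= Rmax a b -> continuity_pt g t) ->
  Rmin (g a) (g b) < s < Rmax (g a) (g b) ->
  exists t, Rmin a b <= t <= Rmax a b /\ g t = s.
Proof.
  assert (Hle : forall a b, a <= b -> (forall t, a <= t <= b -> continuity_pt g t) ->
            Rmin (g a) (g b) < s < Rmax (g a) (g b) -> exists t, a <= t <= b /\ g t = s).
  { clear a b. intros a b Hab Hg Hs. unfold Rmin, Rmax in Hs.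
    assert (Hcont : forall k, a <= k <= b -> continuity_pt (fun t => g t - s) k).
    { intros k Hk. apply continuity_pt_filterlim.
      apply (continuous_minus g (fun _ => s)); [apply continuity_pt_filterlim, Hg, Hk |].
      apply continuous_const. }
    destruct (Rle_dec (g a) (g b)); destruct Hab as [Hab|Hab]; try (subst; lra).
    - destruct (Ranalysis5.IVT_interv (fun t => g t - s) a b) as [t [Ht E]]; try lra.
      + exact Hcont.
      + exists t. split; [exact Ht | lra].
    - destruct (Ranalysis5.IVT_interv (fun t => - (g t - s)) a b) as [t [Ht E]]; try lra.
      + intros k Hk. apply continuity_pt_opp, Hcont, Hk.
      + exists t. split; [exact Ht | lra]. }
  intros Hg Hs. destruct (Rle_dec a b) as [Hab|Hab].
  - rewrite Rmin_left, Rmax_right in * by exact Hab. apply Hle; assumption.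
  - rewrite Rmin_right, Rmax_left in * by lra. rewrite Rmin_comm, Rmax_comm in Hs.
    destruct (Hle b a) as [t Ht]; [lra | assumption | assumption | exists t; exact Ht].
Qed.

(** * The function u *)

Section EquationOfState.

Variables (c : R) (P u : R -> R).
Hypothesis HP : forall r, ex_derive P r /\ continuous (Derive P) r.
Hypothesis Hu : forall r, 0 < r ->
  is_RInt_gen (fun s => Derive P s / (s + P s / c ^ 2)) (at_right 0) (at_point r) (u r).

Definition du (s : R) : R := Derive P s / (s + P s / c ^ 2).

Lemma u_Chasles r1 r2 I : 0 < r1 -> 0 < r2 -> is_RInt du r1 r2 I -> u r2 = u r1 + I.
Proof.
  intros H1 H2 HI.
  apply (is_RInt_gen_at_point du) in HI.
  assert (H12 := is_RInt_gen_Chasles du r1 (u r1) I (Hu r1 H1) HI).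
  rewrite <- (is_RInt_gen_unique _ _ (Hu r2 H2)). exact (is_RInt_gen_unique _ _ H12).
Qed.

(* Where [s + P s / c ^ 2 = 0] the integrand [du] is [_ / 0 = 0] (Rocq's total
   division), so [u] does not change across an interval of such values. *)
Lemma u_const_on_singular r1 r2 : 0 < r1 -> 0 < r2 ->
  (forall s, Rmin r1 r2 < s < Rmax r1 r2 -> s + P s / c ^ 2 = 0) -> u r2 = u r1.
Proof.
  intros H1 H2 Hsing.
  rewrite (u_Chasles r1 r2 0 H1 H2), Rplus_0_r; [reflexivity |].
  apply is_RInt_ext with (fun _ => 0).
  - intros s Hs. unfold du. rewrite (Hsing s Hs).
    unfold Rdiv. rewrite Rinv_0, Rmult_0_r. reflexivity.
  - assert (H0 := @is_RInt_const R_NormedModule r1 r2 0).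
    match type of H0 with is_RInt _ _ _ ?v => replace v with 0 in H0 end; [exact H0 |].
    unfold scal; simpl; unfold mult; simpl; ring.
Qed.

Lemma u_comp_const_segment (g : R -> R) a b :
  (forall t, Rmin a b <= t <= Rmax a b ->
     continuity_pt g t /\ 0 < g t /\ g t + P (g t) / c ^ 2 = 0) ->
  u (g a) = u (g b).
Proof.
  intros Hg.
  assert (Ha : Rmin a b <= a <= Rmax a b) by (split; [apply Rmin_l | apply Rmax_l]).
  assert (Hb : Rmin a b <= b <= Rmax a b) by (split; [apply Rmin_r | apply Rmax_r]).
  symmetry. apply u_const_on_singular; [apply Hg, Ha | apply Hg, Hb |].
  intros s Hs. destruct (IVT_segment g a b s) as [t [Ht <-]].
  - intros t Ht. apply Hg, Ht.
  - exact Hs.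
  - apply Hg, Ht.
Qed.

Lemma u_comp_locally_2d_const (g : R -> R -> R) w z :
  locally_2d (fun x y => continuity_pt (fun t => g t y) x /\ continuity_pt (fun t => g x t) y
                         /\ 0 < g x y /\ g x y + P (g x y) / c ^ 2 = 0) w z ->
  locally_2d (fun x y => u (g x y) = u (g w z)) w z.
Proof.
  intros [d Hd]. exists d. intros x y Hx Hy.
  assert (Hw : Rabs (w - w) < d) by (rewrite Rminus_diag, Rabs_R0; apply cond_pos).
  transitivity (u (g w y)); symmetry.
  - apply (u_comp_const_segment (fun t => g t y) w x). intros t Ht.
    assert (Ht' : Rabs (t - w) < d) by (eapply Rle_lt_trans; [apply Rabs_between, Ht | exact Hx]).
    destruct (Hd t y Ht' Hy) as [H1 [_ H3]]. split; [exact H1 | exact H3].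
  - apply (u_comp_const_segment (fun t => g w t) z y). intros t Ht.
    assert (Ht' : Rabs (t - z) < d) by (eapply Rle_lt_trans; [apply Rabs_between, Ht | exact Hy]).
    destruct (Hd w t Hw Ht') as [_ [H2 H3]]. split; [exact H2 | exact H3].
Qed.

Lemma continuous_du_denominator s : continuous (fun s => s + P s / c ^ 2) s.
Proof. apply (ex_derive_continuous (fun s => s + P s / c ^ 2)). auto_derive. apply HP. Qed.

Lemma continuous_du s : s + P s / c ^ 2 <> 0 -> continuous du s.
Proof.
  intros Hs. apply (continuous_mult (fun s => Derive P s) (fun s => / (s + P s / c ^ 2))).
  - apply HP.
  - apply continuous_Rinv_comp; [apply continuous_du_denominator | exact Hs].
Qed.

Lemma is_derive_u r : 0 < r -> r + P r / c ^ 2 <> 0 -> is_derive u r (du r).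
Proof.
  intros Hr Hh.
  assert (Hgood : locally r (fun s => 0 < s /\ s + P s / c ^ 2 <> 0)).
  { apply filter_and.
    - apply (locally_interval _ r 0 p_infty Hr I). intros y Hy _. exact Hy.
    - exact (continuous_du_denominator r _ (open_neq 0 _ Hh)). }
  destruct Hgood as [d Hd].
  assert (Hseg : forall b, ball r d b -> forall t, Rmin r b <= t <= Rmax r b ->
                   0 < t /\ t + P t / c ^ 2 <> 0).
  { intros b Hb t Ht. apply Hd. change (Rabs (t - r) < d).
    eapply Rle_lt_trans; [apply Rabs_between, Ht | exact Hb]. }
  assert (HRInt : forall b, ball r d b -> is_RInt du r b (RInt du r b)).
  { intros b Hb. apply (RInt_correct (V := R_CompleteNormedModule)).
    apply (ex_RInt_continuous (V := R_CompleteNormedModule)).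
    intros t Ht. apply continuous_du, (Hseg b Hb t Ht). }
  apply is_derive_ext_loc with (fun b => u r + RInt du r b).
  - exists d. intros b Hb. symmetry. apply u_Chasles; [exact Hr | | apply HRInt, Hb].
    apply (Hseg b Hb b). split; [apply Rmin_r | apply Rmax_r].
  - rewrite <- (Rplus_0_l (du r)).
    apply (is_derive_plus (fun _ => u r));
      [apply (is_derive_const (K := R_AbsRing) (V := R_NormedModule)) |].
    apply (is_derive_RInt du _ r r); [exists d; exact HRInt | apply continuous_du, Hh].
Qed.

End EquationOfState.

(** * The metric potential D at frozen angular velocity *)

Definition Dval (c om f a p : R) : R :=
  exp (2 * f) * (1 + om / c * a) ^ 2 - exp (- (2 * f)) * (om ^ 2 / c ^ 2) * p ^ 2.

(* First and second derivatives of [Dval] along a path whose values, first and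
   second derivatives are [(f, a, p)], [(f', a', p')] and [(f'', a'', p'')]. *)
Definition dDval (c om f a p f' a' p' : R) : R :=
  2 * f' * exp (2 * f) * (1 + om / c * a) ^ 2
  + exp (2 * f) * (2 * (1 + om / c * a) * (om / c * a'))
  + 2 * f' * exp (- (2 * f)) * (om ^ 2 / c ^ 2) * p ^ 2
  - exp (- (2 * f)) * (om ^ 2 / c ^ 2) * (2 * p * p').

Definition ddDval (c om f a p f' a' p' f'' a'' p'' : R) : R :=
  (2 * f'' + 4 * f' ^ 2) * exp (2 * f) * (1 + om / c * a) ^ 2
  + 8 * f' * exp (2 * f) * (1 + om / c * a) * (om / c * a')
  + 2 * exp (2 * f) * (om / c * a') ^ 2
  + 2 * exp (2 * f) * (1 + om / c * a) * (om / c * a'')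
  + (2 * f'' - 4 * f' ^ 2) * exp (- (2 * f)) * (om ^ 2 / c ^ 2) * p ^ 2
  + 8 * f' * exp (- (2 * f)) * (om ^ 2 / c ^ 2) * p * p'
  - 2 * exp (- (2 * f)) * (om ^ 2 / c ^ 2) * (p' ^ 2 + p * p'').

Lemma is_derive_Dval c om (f a p : R -> R) t : c <> 0 ->
  ex_derive f t -> ex_derive a t -> ex_derive p t ->
  is_derive (fun s => Dval c om (f s) (a s) (p s)) t
    (dDval c om (f t) (a t) (p t) (Derive f t) (Derive a t) (Derive p t)).
Proof.
  intros Hc Hf Ha Hp. unfold Dval, dDval. auto_derive; [repeat split; assumption |].
  eta_reduce. field. exact Hc.
Qed.

Lemma is_derive_half_ln_Dval c om (f a p : R -> R) t : c <> 0 ->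
  ex_derive f t -> ex_derive a t -> ex_derive p t -> 0 < Dval c om (f t) (a t) (p t) ->
  is_derive (fun s => / 2 * ln (Dval c om (f s) (a s) (p s))) t
    (dDval c om (f t) (a t) (p t) (Derive f t) (Derive a t) (Derive p t)
     / (2 * Dval c om (f t) (a t) (p t))).
Proof.
  intros Hc Hf Ha Hp HD.
  replace (dDval _ _ _ _ _ _ _ _ / _)
    with (scal (dDval c om (f t) (a t) (p t) (Derive f t) (Derive a t) (Derive p t))
               (/ 2 * / Dval c om (f t) (a t) (p t)))
    by (unfold scal; simpl; unfold mult; simpl; field; lra).
  apply (is_derive_comp (fun x => / 2 * ln x)); [| exact (is_derive_Dval c om f a p t Hc Hf Ha Hp)].
  auto_derive; [exact HD | ring].
Qed.

Lemma is_derive_dDval c om (f a p f' a' p' : R -> R) t : c <> 0 ->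
  ex_derive f t -> ex_derive a t -> ex_derive p t ->
  ex_derive f' t -> ex_derive a' t -> ex_derive p' t ->
  Derive f t = f' t -> Derive a t = a' t -> Derive p t = p' t ->
  is_derive (fun s => dDval c om (f s) (a s) (p s) (f' s) (a' s) (p' s)) t
    (ddDval c om (f t) (a t) (p t) (f' t) (a' t) (p' t) (Derive f' t) (Derive a' t) (Derive p' t)).
Proof.
  intros Hc Hf Ha Hp Hf' Ha' Hp' Ef Ea Ep. unfold dDval, ddDval.
  auto_derive; [repeat split; assumption |].
  eta_reduce. rewrite Ef, Ea, Ep. field. exact Hc.
Qed.

Lemma dw_Dval c om O F A Pi w z : c <> 0 ->
  Ck 1 O F -> Ck 1 O A -> Ck 1 O Pi -> O w z ->
  dw (fun x y => Dval c om (F x y) (A x y) (Pi x y)) w z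
  = dDval c om (F w z) (A w z) (Pi w z) (dw F w z) (dw A w z) (dw Pi w z).
Proof.
  intros Hc HF HA HPi Hw. apply is_derive_unique, is_derive_Dval; [exact Hc | ..];
    ex_derive_w_of_Ck.
Qed.

Lemma dz_Dval c om O F A Pi w z : c <> 0 ->
  Ck 1 O F -> Ck 1 O A -> Ck 1 O Pi -> O w z ->
  dz (fun x y => Dval c om (F x y) (A x y) (Pi x y)) w z
  = dDval c om (F w z) (A w z) (Pi w z) (dz F w z) (dz A w z) (dz Pi w z).
Proof.
  intros Hc HF HA HPi Hw. apply is_derive_unique, is_derive_Dval; [exact Hc | ..];
    ex_derive_z_of_Ck.
Qed.

Lemma dw_dw_Dval c om O F A Pi w z : c <> 0 -> open_set O ->
  Ck 2 O F -> Ck 2 O A -> Ck 2 O Pi -> O w z ->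
  dw (dw (fun x y => Dval c om (F x y) (A x y) (Pi x y))) w z
  = ddDval c om (F w z) (A w z) (Pi w z) (dw F w z) (dw A w z) (dw Pi w z)
      (dw (dw F) w z) (dw (dw A) w z) (dw (dw Pi) w z).
Proof.
  intros Hc HO HF HA HPi Hw.
  rewrite (dw_ext_loc _
             (fun x y => dDval c om (F x y) (A x y) (Pi x y) (dw F x y) (dw A x y) (dw Pi x y))).
  - apply is_derive_unique, is_derive_dDval; try reflexivity; [exact Hc | ..];
      ex_derive_w_of_Ck.
  - apply (locally_2d_open O _ w z HO Hw). intros x y Hx.
    apply (dw_Dval c om O); [exact Hc | apply Ck_S_Ck; assumption .. | exact Hx].
Qed.

Lemma dz_dz_Dval c om O F A Pi w z : c <> 0 -> open_set O ->
  Ck 2 O F -> Ck 2 O A -> Ck 2 O Pi -> O w z ->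
  dz (dz (fun x y => Dval c om (F x y) (A x y) (Pi x y))) w z
  = ddDval c om (F w z) (A w z) (Pi w z) (dz F w z) (dz A w z) (dz Pi w z)
      (dz (dz F) w z) (dz (dz A) w z) (dz (dz Pi) w z).
Proof.
  intros Hc HO HF HA HPi Hw.
  rewrite (dz_ext_loc _
             (fun x y => dDval c om (F x y) (A x y) (Pi x y) (dz F x y) (dz A x y) (dz Pi x y))).
  - apply is_derive_unique, is_derive_dDval; try reflexivity; [exact Hc | ..];
      ex_derive_z_of_Ck.
  - apply (locally_2d_open O _ w z HO Hw). intros x y Hx.
    apply (dz_Dval c om O); [exact Hc | apply Ck_S_Ck; assumption .. | exact Hx].
Qed.

(* [Q] stands for the source [16 pi G / c^4 e^(2(K - F)) P] of (c): when [eps + P = 0]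
   the right-hand sides of (a) and (b) reduce to [Q / 2] and [0]. *)
Lemma source_nonneg_of_stationary_Dval
  (c om f a p fw fz aw az pw pz fww fzz aww azz pww pzz Q : R) :
  c <> 0 -> p <> 0 -> 0 < Dval c om f a p ->
  fww + fzz + / p * (pw * fw + pz * fz) + exp (4 * f) / (2 * p ^ 2) * (aw ^ 2 + az ^ 2) = Q / 2 ->
  aww + azz - / p * (pw * aw + pz * az) + 4 * (fw * aw + fz * az) = 0 ->
  pww + pzz = Q * p ->
  dDval c om f a p fw aw pw = 0 -> dDval c om f a p fz az pz = 0 ->
  ddDval c om f a p fw aw pw fww aww pww + ddDval c om f a p fz az pz fzz azz pzz = 0 ->
  0 <= Q.
Proof.
  intros Hc Hp HD Ha Hb HPi Hw Hz Hwz.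
  assert (Efzz : fzz = Q / 2 - fww - / p * (pw * fw + pz * fz)
                       - exp (4 * f) / (2 * p ^ 2) * (aw ^ 2 + az ^ 2)) by lra.
  assert (Eazz : azz = - aww + / p * (pw * aw + pz * az) - 4 * (fw * aw + fz * az)) by lra.
  assert (Epzz : pzz = Q * p - pww) by lra.
  subst fzz azz pzz. clear Ha Hb HPi.
  assert (E4 : exp (4 * f) = exp (2 * f) ^ 2)
    by (replace (4 * f) with (2 * f + 2 * f) by ring; rewrite exp_plus; ring).
  unfold Dval, dDval, ddDval in *. rewrite E4, exp_Ropp in *.
  assert (He : 0 < exp (2 * f)) by apply exp_pos.
  set (e := exp (2 * f)) in *. clearbody e.
  destruct (Req_dec om 0) as [Hom | Hom].
  - (* D = e: F is stationary and (a) reduces to Q = e^2 |grad A|^2 / p^2 *)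
    subst om.
    assert (Hfw : fw = 0).
    { assert (2 * e * fw = 0) by (rewrite <- Hw; field; repeat split; try assumption; lra). nra. }
    assert (Hfz : fz = 0).
    { assert (2 * e * fz = 0) by (rewrite <- Hz; field; repeat split; try assumption; lra). nra. }
    subst fw fz.
    assert (HQ : e * (Q - e ^ 2 * (aw ^ 2 + az ^ 2) / p ^ 2) = 0)
      by (rewrite <- Hwz; field; repeat split; try assumption; lra).
    apply Rmult_integral in HQ. destruct HQ as [HQ | HQ]; [lra |].
    assert (0 <= e ^ 2 * (aw ^ 2 + az ^ 2) / p ^ 2).
    { unfold Rdiv. apply Rmult_le_pos; [nra |]. apply Rlt_le, Rinv_0_lt_compat. nra. }
    lra.
  - (* D_w = D_z = 0 express grad Pi through grad F and grad A; then the
       second-order condition reads Q = e^2 |2 al grad F + k grad A|^2 / (k p)^2 *)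
    assert (Hk : om / c <> 0) by (unfold Rdiv; apply Rmult_integral_contrapositive_currified;
                                  [exact Hom | apply Rinv_neq_0_compat, Hc]).
    replace (om ^ 2 / c ^ 2) with ((om / c) ^ 2) in * by (field; exact Hc).
    set (k := om / c) in *. clearbody k.
    set (al := 1 + k * a) in *. clearbody al.
    assert (Hnz : 2 / e * k ^ 2 * p <> 0).
    { unfold Rdiv. repeat apply Rmult_integral_contrapositive_currified;
        try apply pow_nonzero; try apply Rinv_neq_0_compat; try assumption; lra. }
    assert (Epw : pw = e ^ 2 * al * (al * fw + k * aw) / (k ^ 2 * p) + p * fw).
    { assert (H : 2 / e * k ^ 2 * p
                  * (e ^ 2 * al * (al * fw + k * aw) / (k ^ 2 * p) + p * fw - pw) = 0)
        by (rewrite <- Hw; field; repeat split; try assumption; lra).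
      apply Rmult_integral in H. destruct H as [H | H]; [contradiction | lra]. }
    assert (Epz : pz = e ^ 2 * al * (al * fz + k * az) / (k ^ 2 * p) + p * fz).
    { assert (H : 2 / e * k ^ 2 * p
                  * (e ^ 2 * al * (al * fz + k * az) / (k ^ 2 * p) + p * fz - pz) = 0)
        by (rewrite <- Hz; field; repeat split; try assumption; lra).
      apply Rmult_integral in H. destruct H as [H | H]; [contradiction | lra]. }
    subst pw pz.
    set (S := (2 * al * fw + k * aw) ^ 2 + (2 * al * fz + k * az) ^ 2).
    assert (HQ : (Q - e ^ 2 / (k ^ 2 * p ^ 2) * S) * (e * al ^ 2 - / e * k ^ 2 * p ^ 2) = 0)
      by (rewrite <- Hwz; unfold S; field; repeat split; try assumption; lra).
    apply Rmult_integral in HQ. destruct HQ as [HQ | HQ]; [| lra].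
    assert (0 <= e ^ 2 / (k ^ 2 * p ^ 2) * S).
    { apply Rmult_le_pos; [| apply Rplus_le_le_0_compat; apply pow2_ge_0].
      unfold Rdiv. apply Rmult_le_pos; [nra |]. apply Rlt_le, Rinv_0_lt_compat.
      apply Rmult_lt_0_compat; apply pow2_gt_0; assumption. }
    lra.
Qed.

Lemma source_nonneg_of_locally_const_Dval c om O F A Pi Q w z :
  c <> 0 -> open_set O -> Ck 2 O F -> Ck 2 O A -> Ck 2 O Pi -> O w z -> Pi w z <> 0 ->
  0 < Dval c om (F w z) (A w z) (Pi w z) ->
  locally_2d (fun x y => Dval c om (F x y) (A x y) (Pi x y)
                         = Dval c om (F w z) (A w z) (Pi w z)) w z ->
  Lap F w z + / Pi w z * (dw Pi w z * dw F w z + dz Pi w z * dz F w z)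
    + exp (4 * F w z) / (2 * Pi w z ^ 2) * (dw A w z ^ 2 + dz A w z ^ 2) = Q / 2 ->
  Lap A w z - / Pi w z * (dw Pi w z * dw A w z + dz Pi w z * dz A w z)
    + 4 * (dw F w z * dw A w z + dz F w z * dz A w z) = 0 ->
  Lap Pi w z = Q * Pi w z ->
  0 <= Q.
Proof.
  intros Hc HO HF HA HPi Hw HPi0 HD Hconst Ha Hb HLap.
  assert (HF1 := Ck_S_Ck _ _ _ HF). assert (HA1 := Ck_S_Ck _ _ _ HA).
  assert (HPi1 := Ck_S_Ck _ _ _ HPi).
  apply (source_nonneg_of_stationary_Dval c om (F w z) (A w z) (Pi w z) (dw F w z) (dz F w z)
           (dw A w z) (dz A w z) (dw Pi w z) (dz Pi w z) (dw (dw F) w z) (dz (dz F) w z)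
           (dw (dw A) w z) (dz (dz A) w z) (dw (dw Pi) w z) (dz (dz Pi) w z) Q);
    try assumption.
  - rewrite <- (dw_Dval c om O F A Pi w z) by assumption.
    exact (dw_locally_const _ _ w z Hconst).
  - rewrite <- (dz_Dval c om O F A Pi w z) by assumption.
    exact (dz_locally_const _ _ w z Hconst).
  - rewrite <- (dw_dw_Dval c om O F A Pi w z), <- (dz_dz_Dval c om O F A Pi w z) by assumption.
    rewrite (dw_locally_const _ _ w z (locally_2d_dw_const _ _ w z Hconst)).
    rewrite (dz_locally_const _ _ w z (locally_2d_dz_const _ _ w z Hconst)).
    apply Rplus_0_r.
Qed.

(** * The Euler equation *)

(* Residual of the relativistic Euler equation [dP + (eps + P) d(ln D)/2 = 0]
   (rigid rotation, [eps = c^2 rho]) along one direction. *)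
Definition euler_residual (c om : R) (P : R -> R) (r f a p r' f' a' p' : R) : R :=
  Derive P r * r' + (c ^ 2 * r + P r) * dDval c om f a p f' a' p' / (2 * Dval c om f a p).

Definition euler_dw c P (rho F A Pi : R -> R -> R) om w z : R :=
  euler_residual c om P (rho w z) (F w z) (A w z) (Pi w z)
    (dw rho w z) (dw F w z) (dw A w z) (dw Pi w z).

Definition euler_dz c P (rho F A Pi : R -> R -> R) om w z : R :=
  euler_residual c om P (rho w z) (F w z) (A w z) (Pi w z)
    (dz rho w z) (dz F w z) (dz A w z) (dz Pi w z).

Lemma euler_residuals_vacuum c om P O rho F A Pi w z :
  open_set O -> Ck 1 O rho -> (forall x y, O x y -> 0 <= rho x y) -> P 0 = 0 ->
  O w z -> rho w z = 0 ->
  euler_dw c P rho F A Pi om w z = 0 /\ euler_dz c P rho F A Pi om w z = 0.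
Proof.
  intros HO Hrho Hrho0 HP0 Hw Hr.
  assert (Hmin := locally_2d_open O _ w z HO Hw Hrho0).
  assert (Dw : dw rho w z = 0).
  { apply Derive_local_min; [exact (Ck_S_ex_derive_w _ _ _ _ _ Hrho Hw) |].
    rewrite Hr. exact (locally_2d_1d_const_y _ _ _ Hmin). }
  assert (Dz : dz rho w z = 0).
  { apply Derive_local_min; [exact (Ck_S_ex_derive_z _ _ _ _ _ Hrho Hw) |].
    rewrite Hr. exact (locally_2d_1d_const_x _ _ _ Hmin). }
  unfold euler_dw, euler_dz, euler_residual. rewrite Dw, Dz, Hr, HP0.
  split; unfold Rdiv; ring.
Qed.

Lemma euler_residual_of_first_integral c om C (P u g f a p : R -> R) t :
  (forall r, ex_derive P r /\ continuous (Derive P) r) ->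
  (forall r, 0 < r -> is_RInt_gen (fun s => Derive P s / (s + P s / c ^ 2))
                        (at_right 0) (at_point r) (u r)) ->
  c <> 0 -> ex_derive g t -> ex_derive f t -> ex_derive a t -> ex_derive p t ->
  0 < g t -> g t + P (g t) / c ^ 2 <> 0 -> 0 < Dval c om (f t) (a t) (p t) ->
  locally t (fun s => / 2 * ln (Dval c om (f s) (a s) (p s)) = - (u (g s) / c ^ 2) + C) ->
  euler_residual c om P (g t) (f t) (a t) (p t) (Derive g t) (Derive f t) (Derive a t) (Derive p t)
  = 0.
Proof.
  intros HP Hu Hc Hg Hf Ha Hp Hg0 Hh HD Hint.
  assert (Hu' : is_derive (fun s => - (u (g s) / c ^ 2) + C) t
                  (- (du c P (g t) * Derive g t) / c ^ 2)).
  { assert (Du := is_derive_u c P u HP Hu (g t) Hg0 Hh).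
    auto_derive; [repeat split; [exists (du c P (g t)); exact Du | exact Hg] |].
    eta_reduce. rewrite (is_derive_unique _ _ _ Du). field. exact Hc. }
  assert (E : dDval c om (f t) (a t) (p t) (Derive f t) (Derive a t) (Derive p t)
              / (2 * Dval c om (f t) (a t) (p t)) = - (du c P (g t) * Derive g t) / c ^ 2).
  { assert (Hln := is_derive_ext_loc _ _ _ _ Hint
                     (is_derive_half_ln_Dval c om f a p t Hc Hf Ha Hp HD)).
    exact (eq_trans (eq_sym (is_derive_unique _ _ _ Hln)) (is_derive_unique _ _ _ Hu')). }
  unfold euler_residual. rewrite <- Rmult_div_assoc, E.
  unfold du. field. split; [exact Hc |].
  intro H0. apply Hh. replace (g t + P (g t) / c ^ 2) with ((g t * c ^ 2 + P (g t)) / c ^ 2)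
    by (field; exact Hc). rewrite H0. unfold Rdiv. apply Rmult_0_l.
Qed.

Lemma euler_residuals_of_first_integral c om C (P u : R -> R) O (rho F A Pi : R -> R -> R) w z :
  (forall r, ex_derive P r /\ continuous (Derive P) r) ->
  (forall r, 0 < r -> is_RInt_gen (fun s => Derive P s / (s + P s / c ^ 2))
                        (at_right 0) (at_point r) (u r)) ->
  c <> 0 -> Ck 1 O rho -> Ck 1 O F -> Ck 1 O A -> Ck 1 O Pi -> O w z ->
  0 < rho w z -> rho w z + P (rho w z) / c ^ 2 <> 0 -> 0 < Dval c om (F w z) (A w z) (Pi w z) ->
  locally_2d (fun x y => / 2 * ln (Dval c om (F x y) (A x y) (Pi x y))
                         = - (u (rho x y) / c ^ 2) + C) w z ->
  euler_dw c P rho F A Pi om w z = 0 /\ euler_dz c P rho F A Pi om w z = 0.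
Proof.
  intros HP Hu Hc Hrho HF HA HPi Hw Hr Hh HD Hint. split.
  - apply (euler_residual_of_first_integral c om C P u (fun x => rho x z) (fun x => F x z)
             (fun x => A x z) (fun x => Pi x z) w HP Hu Hc); try assumption;
      try ex_derive_w_of_Ck.
    exact (locally_2d_1d_const_y _ _ _ Hint).
  - apply (euler_residual_of_first_integral c om C P u (fun y => rho w y) (fun y => F w y)
             (fun y => A w y) (fun y => Pi w y) z HP Hu Hc); try assumption;
      try ex_derive_z_of_Ck.
    exact (locally_2d_1d_const_x _ _ _ Hint).
Qed.

Lemma continuity_2d_pt_euler_residuals c om (P : R -> R) O (rho F A Pi : R -> R -> R) w z :
  (forall r, ex_derive P r /\ continuous (Derive P) r) ->
  Ck 1 O rho -> Ck 1 O F -> Ck 1 O A -> Ck 1 O Pi -> O w z ->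
  Dval c om (F w z) (A w z) (Pi w z) <> 0 ->
  continuity_2d_pt (euler_dw c P rho F A Pi om) w z /\
  continuity_2d_pt (euler_dz c P rho F A Pi om) w z.
Proof.
  intros HP Hrho HF HA HPi Hw HD.
  assert (Hcont : forall f, Ck 1 O f ->
            continuity_2d_pt f w z /\ continuity_2d_pt (dw f) w z /\ continuity_2d_pt (dz f) w z).
  { intros f Hf. repeat split.
    - exact (Ck_continuity_2d_pt _ _ _ _ _ Hf Hw).
    - exact (Ck_continuity_2d_pt _ _ _ _ _ (Ck_S_dw _ _ _ Hf) Hw).
    - exact (Ck_continuity_2d_pt _ _ _ _ _ (Ck_S_dz _ _ _ Hf) Hw). }
  destruct (Hcont rho Hrho) as [Cr [Crw Crz]]. destruct (Hcont F HF) as [CF [CFw CFz]].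
  destruct (Hcont A HA) as [CA [CAw CAz]]. destruct (Hcont Pi HPi) as [CPi [CPiw CPiz]].
  assert (CP' : continuity_2d_pt (fun x y => Derive P (rho x y)) w z).
  { apply (continuity_1d_2d_pt_comp (Derive P) rho); [| exact Cr].
    apply continuity_pt_filterlim, HP. }
  assert (CP : continuity_2d_pt (fun x y => P (rho x y)) w z).
  { apply (continuity_1d_2d_pt_comp P rho); [| exact Cr].
    apply continuity_pt_filterlim. exact (ex_derive_continuous P _ (proj1 (HP _))). }
  unfold euler_dw, euler_dz, euler_residual, dDval, Dval in *.
  split; continuity_2d; intro H0; apply HD; lra.
Qed.

Section RigidRotation.

Variables (c G Om0 C : R) (P u : R -> R) (O O1 O2 : R -> R -> Prop)
          (rho Om K F A Pi : R -> R -> R).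
Hypotheses (Hc : 0 < c) (HG : 0 < G).
Hypothesis HP : forall r, ex_derive P r /\ continuous (Derive P) r.
Hypothesis Hu : forall r, 0 < r ->
  is_RInt_gen (fun s => Derive P s / (s + P s / c ^ 2)) (at_right 0) (at_point r) (u r).
Hypothesis HO : open_set O.
Hypothesis HOU : forall w z, O w z <-> (O1 w z \/ O2 w z).
Hypotheses (Hrho : Ck 1 O rho) (HF : Ck 2 O F) (HA : Ck 2 O A) (HPi : Ck 2 O Pi).
Hypothesis Hrho0 : forall w z, O w z -> 0 <= rho w z.
Hypothesis HPi0 : forall w z, O w z -> Pi w z <> 0.
Hypothesis HD : forall w z, O w z -> 0 < calD c F A Pi Om w z.
Hypothesis HOm0 : forall w z, O1 w z -> Om w z = Om0.
Hypothesis Hvac : forall w z, O2 w z -> rho w z = 0 /\ P (rho w z) = 0.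
Hypothesis HP0 : P 0 = 0.
Hypothesis Ha : forall w z, O w z ->
  Lap F w z + / Pi w z * (dw Pi w z * dw F w z + dz Pi w z * dz F w z)
  + exp (4 * F w z) / (2 * Pi w z ^ 2) * (dw A w z ^ 2 + dz A w z ^ 2)
  = 4 * PI * G / c ^ 4 * exp (2 * (- F w z + K w z))
    * ((c ^ 2 * rho w z + P (rho w z))
       * (exp (2 * F w z) * (1 + Om w z / c * A w z) ^ 2
          + exp (- (2 * F w z)) * (Om w z ^ 2 / c ^ 2) * Pi w z ^ 2)
       / calD c F A Pi Om w z
       + 2 * P (rho w z)).
Hypothesis Hb : forall w z, O w z ->
  Lap A w z - / Pi w z * (dw Pi w z * dw A w z + dz Pi w z * dz A w z)
  + 4 * (dw F w z * dw A w z + dz F w z * dz A w z)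
  = - (16 * PI * G / c ^ 4) * exp (2 * (- F w z + K w z))
    * (c ^ 2 * rho w z + P (rho w z))
    * (exp (- (2 * F w z)) * (Om w z / c) * Pi w z ^ 2 * (1 + Om w z / c * A w z))
    / calD c F A Pi Om w z.
Hypothesis HLapPi : forall w z, O w z ->
  Lap Pi w z = 16 * PI * G / c ^ 4 * exp (2 * (- F w z + K w z)) * P (rho w z) * Pi w z.
Hypothesis Hf : forall w z, O w z -> 0 < rho w z ->
  / 2 * ln (calD c F A Pi Om w z) = - (u (rho w z) / c ^ 2) + C.

Let Hc0 : c <> 0 := Rgt_not_eq c 0 Hc.

Lemma O1_of_rho_pos w z : O w z -> 0 < rho w z -> O1 w z.
Proof.
  intros Hw Hr. destruct (proj1 (HOU w z) Hw) as [H1 | H2]; [exact H1 |].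
  destruct (Hvac w z H2). lra.
Qed.

Lemma Dval_pos_O1 w z : O w z -> O1 w z -> 0 < Dval c Om0 (F w z) (A w z) (Pi w z).
Proof. intros Hw H1. rewrite <- (HOm0 w z H1). exact (HD w z Hw). Qed.

Lemma first_integral_locally w z : O w z -> 0 < rho w z ->
  locally_2d (fun x y => / 2 * ln (Dval c Om0 (F x y) (A x y) (Pi x y))
                         = - (u (rho x y) / c ^ 2) + C) w z.
Proof.
  intros Hw Hr.
  assert (Hloc : locally_2d (fun x y => O x y /\ 0 < rho x y) w z).
  { apply locally_2d_and; [exact (locally_2d_open O O w z HO Hw (fun x y H => H)) |].
    exact (locally_2d_pos rho w z (Ck_continuity_2d_pt _ _ _ _ _ Hrho Hw) Hr). }
  apply (locally_2d_impl (fun x y => O x y /\ 0 < rho x y)); [| exact Hloc].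
  apply locally_2d_forall. intros x y [Hx Hrx].
  rewrite <- (HOm0 x y (O1_of_rho_pos x y Hx Hrx)). exact (Hf x y Hx Hrx).
Qed.

Lemma euler_residuals_regular w z : O w z -> 0 < rho w z ->
  rho w z + P (rho w z) / c ^ 2 <> 0 ->
  euler_dw c P rho F A Pi Om0 w z = 0 /\ euler_dz c P rho F A Pi Om0 w z = 0.
Proof.
  intros Hw Hr Hh.
  apply (euler_residuals_of_first_integral c Om0 C P u O); try assumption;
    try (apply Ck_S_Ck; assumption).
  - apply Dval_pos_O1; [exact Hw | exact (O1_of_rho_pos w z Hw Hr)].
  - exact (first_integral_locally w z Hw Hr).
Qed.

Lemma singular_near_nonzero_residuals w z : O w z -> 0 < rho w z ->
  euler_dw c P rho F A Pi Om0 w z ^ 2 + euler_dz c P rho F A Pi Om0 w z ^ 2 <> 0 ->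
  locally_2d (fun x y => continuity_pt (fun t => rho t y) x /\ continuity_pt (fun t => rho x t) y
                         /\ 0 < rho x y /\ rho x y + P (rho x y) / c ^ 2 = 0) w z.
Proof.
  intros Hw Hr HS.
  set (S := fun x y => euler_dw c P rho F A Pi Om0 x y ^ 2 + euler_dz c P rho F A Pi Om0 x y ^ 2).
  assert (HCS : continuity_2d_pt S w z).
  { destruct (continuity_2d_pt_euler_residuals c Om0 P O rho F A Pi w z HP Hrho
                (Ck_S_Ck _ _ _ HF) (Ck_S_Ck _ _ _ HA) (Ck_S_Ck _ _ _ HPi) Hw) as [C1 C2].
    - apply Rgt_not_eq, (Dval_pos_O1 w z Hw (O1_of_rho_pos w z Hw Hr)).
    - unfold S. continuity_2d. }
  assert (Hnear : locally_2d (fun x y => O x y /\ 0 < rho x y /\ S x y <> 0) w z).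
  { apply locally_2d_and; [exact (locally_2d_open O O w z HO Hw (fun x y H => H)) |].
    apply locally_2d_and; [| exact (continuity_2d_pt_neq_0 S w z HCS HS)].
    exact (locally_2d_pos rho w z (Ck_continuity_2d_pt _ _ _ _ _ Hrho Hw) Hr). }
  apply (locally_2d_impl (fun x y => O x y /\ 0 < rho x y /\ S x y <> 0)); [| exact Hnear].
  apply locally_2d_forall. intros x y [Hx [Hrx HSx]]. repeat split; [| | exact Hrx |].
  - apply continuity_pt_filterlim.
    exact (ex_derive_continuous (fun t => rho t y) x (Ck_S_ex_derive_w _ _ _ _ _ Hrho Hx)).
  - apply continuity_pt_filterlim.
    exact (ex_derive_continuous (fun t => rho x t) y (Ck_S_ex_derive_z _ _ _ _ _ Hrho Hx)).
  - destruct (Req_dec (rho x y + P (rho x y) / c ^ 2) 0) as [E | E]; [exact E | exfalso].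
    apply HSx. unfold S. destruct (euler_residuals_regular x y Hx Hrx E) as [-> ->]. ring.
Qed.

Lemma Dval_locally_const_of_singular w z : O w z -> 0 < rho w z ->
  locally_2d (fun x y => continuity_pt (fun t => rho t y) x /\ continuity_pt (fun t => rho x t) y
                         /\ 0 < rho x y /\ rho x y + P (rho x y) / c ^ 2 = 0) w z ->
  locally_2d (fun x y => Dval c Om0 (F x y) (A x y) (Pi x y)
                         = Dval c Om0 (F w z) (A w z) (Pi w z)) w z.
Proof.
  intros Hw Hr Hsing.
  assert (Hint := first_integral_locally w z Hw Hr).
  assert (Hint0 := locally_2d_singleton _ _ _ Hint). cbv beta in Hint0.
  apply (locally_2d_impl (fun x y => (O x y /\ 0 < rho x y)
           /\ / 2 * ln (Dval c Om0 (F x y) (A x y) (Pi x y)) = - (u (rho x y) / c ^ 2) + C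
           /\ u (rho x y) = u (rho w z))).
  - apply locally_2d_forall. intros x y [[Hx Hrx] [Hintx Hux]].
    apply ln_inv; [apply (Dval_pos_O1 x y Hx (O1_of_rho_pos x y Hx Hrx)) |
                   apply (Dval_pos_O1 w z Hw (O1_of_rho_pos w z Hw Hr)) |].
    rewrite Hux in Hintx. lra.
  - apply locally_2d_and; [| apply locally_2d_and; [exact Hint |]].
    + apply locally_2d_and; [exact (locally_2d_open O O w z HO Hw (fun x y H => H)) |].
      exact (locally_2d_pos rho w z (Ck_continuity_2d_pt _ _ _ _ _ Hrho Hw) Hr).
    + exact (u_comp_locally_2d_const c P u Hu rho w z Hsing).
Qed.

Lemma euler_residuals_degenerate w z : O w z -> 0 < rho w z ->
  rho w z + P (rho w z) / c ^ 2 = 0 ->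
  euler_dw c P rho F A Pi Om0 w z = 0 /\ euler_dz c P rho F A Pi Om0 w z = 0.
Proof.
  intros Hw Hr Hh.
  destruct (Req_dec (euler_dw c P rho F A Pi Om0 w z ^ 2 + euler_dz c P rho F A Pi Om0 w z ^ 2) 0)
    as [HS | HS]; [split; nra | exfalso].
  assert (HDconst := Dval_locally_const_of_singular w z Hw Hr
                       (singular_near_nonzero_residuals w z Hw Hr HS)).
  set (Q := 16 * PI * G / c ^ 4 * exp (2 * (- F w z + K w z)) * P (rho w z)).
  assert (HM : c ^ 2 * rho w z + P (rho w z) = 0).
  { replace (c ^ 2 * rho w z + P (rho w z)) with (c ^ 2 * (rho w z + P (rho w z) / c ^ 2))
      by (field; exact Hc0). rewrite Hh. ring. }
  assert (HQ : 0 <= Q).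
  { apply (source_nonneg_of_locally_const_Dval c Om0 O F A Pi Q w z Hc0 HO HF HA HPi Hw
             (HPi0 w z Hw) (Dval_pos_O1 w z Hw (O1_of_rho_pos w z Hw Hr)) HDconst).
    - rewrite (Ha w z Hw), HM. unfold Q. field.
      split; [exact Hc0 | apply Rgt_not_eq, (HD w z Hw)].
    - rewrite (Hb w z Hw), HM. unfold Rdiv. ring.
    - rewrite (HLapPi w z Hw). reflexivity. }
  assert (HQneg : Q < 0).
  { unfold Q. replace (P (rho w z)) with (- (c ^ 2 * rho w z)) by lra.
    assert (Hk : 0 < 16 * PI * G / c ^ 4 * exp (2 * (- F w z + K w z))).
    { assert (HPI := PI_RGT_0).
      apply Rmult_lt_0_compat; [| apply exp_pos]. unfold Rdiv.
      apply Rmult_lt_0_compat; [| apply Rinv_0_lt_compat, pow_lt, Hc]. nra. }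
    assert (0 < c ^ 2 * rho w z) by (apply Rmult_lt_0_compat; [apply pow_lt, Hc | exact Hr]).
    nra. }
  lra.
Qed.

Lemma euler_residuals_vanish w z : O w z ->
  euler_dw c P rho F A Pi (Om w z) w z = 0 /\ euler_dz c P rho F A Pi (Om w z) w z = 0.
Proof.
  intros Hw. destruct (Req_dec (rho w z) 0) as [Hr | Hr].
  - exact (euler_residuals_vacuum c (Om w z) P O rho F A Pi w z HO Hrho Hrho0 HP0 Hw Hr).
  - assert (Hpos : 0 < rho w z).
    { destruct (Hrho0 w z Hw) as [H | H]; [exact H | symmetry in H; contradiction]. }
    rewrite (HOm0 w z (O1_of_rho_pos w z Hw Hpos)).
    destruct (Req_dec (rho w z + P (rho w z) / c ^ 2) 0) as [Hh | Hh].
    + exact (euler_residuals_degenerate w z Hw Hpos Hh).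
    + exact (euler_residuals_regular w z Hw Hpos Hh).
Qed.

End RigidRotation.

(** * The curl of (K1, K3) *)

Definition Rd_val (p pww pzz f fw fz aw az : R) : R :=
  / 2 * (pww - pzz) + p * (fw ^ 2 - fz ^ 2) - exp (4 * f) / (4 * p) * (aw ^ 2 - az ^ 2).

Definition Re_val (p pwz f fw fz aw az : R) : R :=
  pwz + 2 * p * fw * fz - exp (4 * f) / (2 * p) * aw * az.

(* Derivatives along a path; primed arguments are the derivatives of the
   unprimed ones. *)
Definition Rd_dot (p pww pzz f fw fz aw az p' pww' pzz' f' fw' fz' aw' az' : R) : R :=
  / 2 * (pww' - pzz') + p' * (fw ^ 2 - fz ^ 2) + 2 * p * (fw * fw' - fz * fz')
  - exp (4 * f) * (4 * f' * p - p') / (4 * p ^ 2) * (aw ^ 2 - az ^ 2)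
  - exp (4 * f) / (4 * p) * (2 * (aw * aw' - az * az')).

Definition Re_dot (p pwz f fw fz aw az p' pwz' f' fw' fz' aw' az' : R) : R :=
  pwz' + 2 * (p' * fw * fz + p * fw' * fz + p * fw * fz')
  - exp (4 * f) * (4 * f' * p - p') / (2 * p ^ 2) * aw * az
  - exp (4 * f) / (2 * p) * (aw' * az + aw * az').

Definition K1_dot (pw pz rd re pw' pz' rd' re' : R) : R :=
  / (pw ^ 2 + pz ^ 2) * (pw' * rd + pw * rd' + pz' * re + pz * re')
  - 2 * (pw * pw' + pz * pz') / (pw ^ 2 + pz ^ 2) ^ 2 * (pw * rd + pz * re).

Definition K3_dot (pw pz rd re pw' pz' rd' re' : R) : R :=
  / (pw ^ 2 + pz ^ 2) * (- pz' * rd - pz * rd' + pw' * re + pw * re')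
  - 2 * (pw * pw' + pz * pz') / (pw ^ 2 + pz ^ 2) ^ 2 * (- pz * rd + pw * re).

Lemma is_derive_Rd_val (p pww pzz f fw fz aw az : R -> R) t :
  ex_derive p t -> ex_derive pww t -> ex_derive pzz t -> ex_derive f t ->
  ex_derive fw t -> ex_derive fz t -> ex_derive aw t -> ex_derive az t -> p t <> 0 ->
  is_derive (fun s => Rd_val (p s) (pww s) (pzz s) (f s) (fw s) (fz s) (aw s) (az s)) t
    (Rd_dot (p t) (pww t) (pzz t) (f t) (fw t) (fz t) (aw t) (az t)
       (Derive p t) (Derive pww t) (Derive pzz t) (Derive f t)
       (Derive fw t) (Derive fz t) (Derive aw t) (Derive az t)).
Proof.
  intros Hp Hpww Hpzz Hf Hfw Hfz Haw Haz Hp0. unfold Rd_val, Rd_dot.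
  auto_derive; [repeat split; try assumption; intro H; apply Hp0; lra |].
  eta_reduce. field. assumption.
Qed.

Lemma is_derive_Re_val (p pwz f fw fz aw az : R -> R) t :
  ex_derive p t -> ex_derive pwz t -> ex_derive f t ->
  ex_derive fw t -> ex_derive fz t -> ex_derive aw t -> ex_derive az t -> p t <> 0 ->
  is_derive (fun s => Re_val (p s) (pwz s) (f s) (fw s) (fz s) (aw s) (az s)) t
    (Re_dot (p t) (pwz t) (f t) (fw t) (fz t) (aw t) (az t)
       (Derive p t) (Derive pwz t) (Derive f t)
       (Derive fw t) (Derive fz t) (Derive aw t) (Derive az t)).
Proof.
  intros Hp Hpwz Hf Hfw Hfz Haw Haz Hp0. unfold Re_val, Re_dot.
  auto_derive; [repeat split; try assumption; intro H; apply Hp0; lra |].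
  eta_reduce. field. assumption.
Qed.

Lemma is_derive_K1 (pw pz rd re : R -> R) t pw' pz' rd' re' :
  is_derive pw t pw' -> is_derive pz t pz' -> is_derive rd t rd' -> is_derive re t re' ->
  pw t ^ 2 + pz t ^ 2 <> 0 ->
  is_derive (fun s => / (pw s ^ 2 + pz s ^ 2) * (pw s * rd s + pz s * re s)) t
    (K1_dot (pw t) (pz t) (rd t) (re t) pw' pz' rd' re').
Proof.
  intros Hpw Hpz Hrd Hre Hg. unfold K1_dot.
  auto_derive; [repeat split; try assumption; eexists; eassumption |].
  eta_reduce. rewrite (is_derive_unique _ _ _ Hpw), (is_derive_unique _ _ _ Hpz),
    (is_derive_unique _ _ _ Hrd), (is_derive_unique _ _ _ Hre).
  field. assumption.
Qed.

Lemma is_derive_K3 (pw pz rd re : R -> R) t pw' pz' rd' re' :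
  is_derive pw t pw' -> is_derive pz t pz' -> is_derive rd t rd' -> is_derive re t re' ->
  pw t ^ 2 + pz t ^ 2 <> 0 ->
  is_derive (fun s => / (pw s ^ 2 + pz s ^ 2) * (- pz s * rd s + pw s * re s)) t
    (K3_dot (pw t) (pz t) (rd t) (re t) pw' pz' rd' re').
Proof.
  intros Hpw Hpz Hrd Hre Hg. unfold K3_dot.
  auto_derive; [repeat split; try assumption; eexists; eassumption |].
  eta_reduce. rewrite (is_derive_unique _ _ _ Hpw), (is_derive_unique _ _ _ Hpz),
    (is_derive_unique _ _ _ Hrd), (is_derive_unique _ _ _ Hre).
  field. assumption.
Qed.

Lemma dz_K1t O F A Pi w z : open_set O -> Ck 2 O F -> Ck 2 O A -> Ck 3 O Pi -> O w z ->
  Pi w z <> 0 -> gradPi2 Pi w z <> 0 ->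
  dz (K1t F A Pi) w z
  = K1_dot (dw Pi w z) (dz Pi w z) (Rd F A Pi w z) (Re F A Pi w z)
      (dz (dw Pi) w z) (dz (dz Pi) w z)
      (Rd_dot (Pi w z) (dw (dw Pi) w z) (dz (dz Pi) w z) (F w z) (dw F w z) (dz F w z)
         (dw A w z) (dz A w z) (dz Pi w z) (dz (dw (dw Pi)) w z) (dz (dz (dz Pi)) w z)
         (dz F w z) (dz (dw F) w z) (dz (dz F) w z) (dz (dw A) w z) (dz (dz A) w z))
      (Re_dot (Pi w z) (dz (dw Pi) w z) (F w z) (dw F w z) (dz F w z) (dw A w z) (dz A w z)
         (dz Pi w z) (dw (dz (dz Pi)) w z) (dz F w z) (dz (dw F) w z) (dz (dz F) w z)
         (dz (dw A) w z) (dz (dz A) w z)).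
Proof.
  intros HO HF HA HPi Hw HPi0 Hg.
  apply is_derive_unique.
  apply (is_derive_K1 (fun t => dw Pi w t) (fun t => dz Pi w t)
           (fun t => Rd F A Pi w t) (fun t => Re F A Pi w t)); [| | | | exact Hg].
  - apply Derive_correct. ex_derive_z_of_Ck.
  - apply Derive_correct. ex_derive_z_of_Ck.
  - apply (is_derive_Rd_val (fun t => Pi w t) (fun t => dw (dw Pi) w t) (fun t => dz (dz Pi) w t)
             (fun t => F w t) (fun t => dw F w t) (fun t => dz F w t)
             (fun t => dw A w t) (fun t => dz A w t)); [ex_derive_z_of_Ck .. | exact HPi0].
  - rewrite <- (dz_dz_dw_comm O Pi w z HO HPi Hw).
    apply (is_derive_Re_val (fun t => Pi w t) (fun t => dz (dw Pi) w t)
             (fun t => F w t) (fun t => dw F w t) (fun t => dz F w t)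
             (fun t => dw A w t) (fun t => dz A w t)); [ex_derive_z_of_Ck .. | exact HPi0].
Qed.

Lemma dw_K3t O F A Pi w z : open_set O -> Ck 2 O F -> Ck 2 O A -> Ck 3 O Pi -> O w z ->
  Pi w z <> 0 -> gradPi2 Pi w z <> 0 ->
  dw (K3t F A Pi) w z
  = K3_dot (dw Pi w z) (dz Pi w z) (Rd F A Pi w z) (Re F A Pi w z)
      (dw (dw Pi) w z) (dz (dw Pi) w z)
      (Rd_dot (Pi w z) (dw (dw Pi) w z) (dz (dz Pi) w z) (F w z) (dw F w z) (dz F w z)
         (dw A w z) (dz A w z) (dw Pi w z) (dw (dw (dw Pi)) w z) (dw (dz (dz Pi)) w z)
         (dw F w z) (dw (dw F) w z) (dz (dw F) w z) (dw (dw A) w z) (dz (dw A) w z))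
      (Re_dot (Pi w z) (dz (dw Pi) w z) (F w z) (dw F w z) (dz F w z) (dw A w z) (dz A w z)
         (dw Pi w z) (dz (dw (dw Pi)) w z) (dw F w z) (dw (dw F) w z) (dz (dw F) w z)
         (dw (dw A) w z) (dz (dw A) w z)).
Proof.
  intros HO HF HA HPi Hw HPi0 Hg.
  assert (HPi2 := Ck_S_Ck _ _ _ HPi).
  apply is_derive_unique.
  apply (is_derive_K3 (fun t => dw Pi t z) (fun t => dz Pi t z)
           (fun t => Rd F A Pi t z) (fun t => Re F A Pi t z)); [| | | | exact Hg].
  - apply Derive_correct. ex_derive_w_of_Ck.
  - rewrite <- (dw_dz_comm O Pi w z HO HPi2 Hw).
    apply Derive_correct. ex_derive_w_of_Ck.
  - rewrite <- (dw_dz_comm O F w z HO HF Hw), <- (dw_dz_comm O A w z HO HA Hw).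
    apply (is_derive_Rd_val (fun t => Pi t z) (fun t => dw (dw Pi) t z) (fun t => dz (dz Pi) t z)
             (fun t => F t z) (fun t => dw F t z) (fun t => dz F t z)
             (fun t => dw A t z) (fun t => dz A t z)); [ex_derive_w_of_Ck .. | exact HPi0].
  - rewrite <- (dw_dz_comm O F w z HO HF Hw), <- (dw_dz_comm O A w z HO HA Hw),
      <- (dw_dz_comm O (dw Pi) w z HO (Ck_S_dw _ _ _ HPi) Hw).
    apply (is_derive_Re_val (fun t => Pi t z) (fun t => dz (dw Pi) t z)
             (fun t => F t z) (fun t => dw F t z) (fun t => dz F t z)
             (fun t => dw A t z) (fun t => dz A t z)); [ex_derive_w_of_Ck .. | exact HPi0].
Qed.

Lemma is_derive_Pi_source c G (P f k r p : R -> R) t :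
  ex_derive f t -> ex_derive k t -> ex_derive r t -> ex_derive p t -> ex_derive P (r t) ->
  is_derive (fun s => 16 * PI * G / c ^ 4 * exp (2 * (- f s + k s)) * P (r s) * p s) t
    (16 * PI * G / c ^ 4 *
      (exp (2 * (- f t + k t)) * (2 * (- Derive f t + Derive k t)) * P (r t) * p t
       + exp (2 * (- f t + k t)) * (Derive P (r t) * Derive r t) * p t
       + exp (2 * (- f t + k t)) * P (r t) * Derive p t)).
Proof.
  intros Hf Hk Hr Hp HP. auto_derive; [repeat split; assumption |].
  eta_reduce. simpl. ring.
Qed.

Lemma dw_Lap_Pi c G (P : R -> R) O (rho K F Pi : R -> R -> R) w z :
  (forall r, ex_derive P r) -> open_set O ->
  Ck 1 O rho -> Ck 1 O K -> Ck 1 O F -> Ck 3 O Pi -> O w z ->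
  (forall x y, O x y ->
     Lap Pi x y = 16 * PI * G / c ^ 4 * exp (2 * (- F x y + K x y)) * P (rho x y) * Pi x y) ->
  dw (dw (dw Pi)) w z + dw (dz (dz Pi)) w z
  = 16 * PI * G / c ^ 4 *
      (exp (2 * (- F w z + K w z)) * (2 * (- dw F w z + dw K w z)) * P (rho w z) * Pi w z
       + exp (2 * (- F w z + K w z)) * (Derive P (rho w z) * dw rho w z) * Pi w z
       + exp (2 * (- F w z + K w z)) * P (rho w z) * dw Pi w z).
Proof.
  intros HP HO Hrho HK HF HPi Hw HLap.
  rewrite (dw_Lap O Pi _ w z HO HPi Hw HLap).
  apply is_derive_unique, (is_derive_Pi_source c G P (fun x => F x z) (fun x => K x z)
                             (fun x => rho x z) (fun x => Pi x z));
    [ex_derive_w_of_Ck .. | apply HP].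
Qed.

Lemma dz_Lap_Pi c G (P : R -> R) O (rho K F Pi : R -> R -> R) w z :
  (forall r, ex_derive P r) -> open_set O ->
  Ck 1 O rho -> Ck 1 O K -> Ck 1 O F -> Ck 3 O Pi -> O w z ->
  (forall x y, O x y ->
     Lap Pi x y = 16 * PI * G / c ^ 4 * exp (2 * (- F x y + K x y)) * P (rho x y) * Pi x y) ->
  dz (dw (dw Pi)) w z + dz (dz (dz Pi)) w z
  = 16 * PI * G / c ^ 4 *
      (exp (2 * (- F w z + K w z)) * (2 * (- dz F w z + dz K w z)) * P (rho w z) * Pi w z
       + exp (2 * (- F w z + K w z)) * (Derive P (rho w z) * dz rho w z) * Pi w z
       + exp (2 * (- F w z + K w z)) * P (rho w z) * dz Pi w z).
Proof.
  intros HP HO Hrho HK HF HPi Hw HLap.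
  rewrite (dz_Lap O Pi _ w z HO HPi Hw HLap).
  apply is_derive_unique, (is_derive_Pi_source c G P (fun y => F w y) (fun y => K w y)
                             (fun y => rho w y) (fun y => Pi w y));
    [ex_derive_z_of_Ck .. | apply HP].
Qed.

Lemma curl_K_identity c G (P : R -> R) (s om a r Kw Kz f p pw pz pww pwz pzz pwww pwwz pwzz pzzz
                                        fw fz fww fwz fzz aw az aww awz azz rw rz : R) :
  c <> 0 -> p <> 0 -> pw ^ 2 + pz ^ 2 <> 0 -> Dval c om f a p <> 0 ->
  fww + fzz + / p * (pw * fw + pz * fz) + exp (4 * f) / (2 * p ^ 2) * (aw ^ 2 + az ^ 2)
  = 4 * PI * G / c ^ 4 * s
    * ((c ^ 2 * r + P r) * (exp (2 * f) * (1 + om / c * a) ^ 2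
                            + exp (- (2 * f)) * (om ^ 2 / c ^ 2) * p ^ 2) / Dval c om f a p
       + 2 * P r) ->
  aww + azz - / p * (pw * aw + pz * az) + 4 * (fw * aw + fz * az)
  = - (16 * PI * G / c ^ 4) * s * (c ^ 2 * r + P r)
    * (exp (- (2 * f)) * (om / c) * p ^ 2 * (1 + om / c * a)) / Dval c om f a p ->
  pww + pzz = 16 * PI * G / c ^ 4 * s * P r * p ->
  pwww + pwzz = 16 * PI * G / c ^ 4 *
    (s * (2 * (- fw + Kw)) * P r * p + s * (Derive P r * rw) * p + s * P r * pw) ->
  pwwz + pzzz = 16 * PI * G / c ^ 4 *
    (s * (2 * (- fz + Kz)) * P r * p + s * (Derive P r * rz) * p + s * P r * pz) ->
  euler_residual c om P r f a p rw fw aw pw = 0 ->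
  euler_residual c om P r f a p rz fz az pz = 0 ->
  K1_dot pw pz (Rd_val p pww pzz f fw fz aw az) (Re_val p pwz f fw fz aw az) pwz pzz
    (Rd_dot p pww pzz f fw fz aw az pz pwwz pzzz fz fwz fzz awz azz)
    (Re_dot p pwz f fw fz aw az pz pwzz fz fwz fzz awz azz)
  - K3_dot pw pz (Rd_val p pww pzz f fw fz aw az) (Re_val p pwz f fw fz aw az) pww pwz
    (Rd_dot p pww pzz f fw fz aw az pw pwww pwzz fw fww fwz aww awz)
    (Re_dot p pwz f fw fz aw az pw pwwz fw fww fwz aww awz)
  = 16 * PI * G / c ^ 4 * s * P r * p * / (pw ^ 2 + pz ^ 2)
    * ((Kw - / (pw ^ 2 + pz ^ 2) * (pw * Rd_val p pww pzz f fw fz aw az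
                                    + pz * Re_val p pwz f fw fz aw az)) * pz
       - (Kz - / (pw ^ 2 + pz ^ 2) * (- pz * Rd_val p pww pzz f fw fz aw az
                                      + pw * Re_val p pwz f fw fz aw az)) * pw).
Proof.
  intros Hc Hp Hg HD Ha Hb HLap Hw Hz Ew Ez.
  apply Rminus_diag_uniq.
  transitivity (16 * PI * G / c ^ 4 * s * p / (2 * (pw ^ 2 + pz ^ 2))
                * (euler_residual c om P r f a p rw fw aw pw * pz
                   - euler_residual c om P r f a p rz fz az pz * pw));
    [| rewrite Ew, Ez; ring].
  assert (Efzz : fzz = 4 * PI * G / c ^ 4 * s
    * ((c ^ 2 * r + P r) * (exp (2 * f) * (1 + om / c * a) ^ 2
                            + exp (- (2 * f)) * (om ^ 2 / c ^ 2) * p ^ 2) / Dval c om f a p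
       + 2 * P r) - fww - / p * (pw * fw + pz * fz) - exp (4 * f) / (2 * p ^ 2) * (aw ^ 2 + az ^ 2))
    by lra.
  assert (Eazz : azz = - (16 * PI * G / c ^ 4) * s * (c ^ 2 * r + P r)
    * (exp (- (2 * f)) * (om / c) * p ^ 2 * (1 + om / c * a)) / Dval c om f a p
    - aww + / p * (pw * aw + pz * az) - 4 * (fw * aw + fz * az)) by lra.
  assert (Epzz : pzz = 16 * PI * G / c ^ 4 * s * P r * p - pww) by lra.
  assert (Epwzz : pwzz = 16 * PI * G / c ^ 4 *
    (s * (2 * (- fw + Kw)) * P r * p + s * (Derive P r * rw) * p + s * P r * pw) - pwww) by lra.
  assert (Epzzz : pzzz = 16 * PI * G / c ^ 4 *
    (s * (2 * (- fz + Kz)) * P r * p + s * (Derive P r * rz) * p + s * P r * pz) - pwwz) by lra.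
  subst fzz azz pzz pwzz pzzz. clear Ha Hb HLap Hw Hz Ew Ez.
  assert (E4 : exp (4 * f) = exp (2 * f) ^ 2)
    by (replace (4 * f) with (2 * f + 2 * f) by ring; rewrite exp_plus; ring).
  unfold K1_dot, K3_dot, Rd_val, Re_val, Rd_dot, Re_dot, euler_residual, dDval, Dval in *.
  rewrite E4, exp_Ropp in *.
  assert (He : exp (2 * f) <> 0) by (apply Rgt_not_eq, exp_pos).
  set (e := exp (2 * f)) in *. clearbody e.
  assert (HD' : e * (c + om * a) ^ 2 * e - (om * p) ^ 2 <> 0).
  { intro H0. apply HD. apply (Rmult_eq_reg_l (c ^ 2 * e)).
    - rewrite Rmult_0_r, <- H0. field. split; assumption.
    - apply Rmult_integral_contrapositive_currified; [apply pow_nonzero |]; assumption. }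
  field. repeat split; assumption.
Qed.

Lemma curl_K_tilde c G (P : R -> R) O (rho Om K F A Pi : R -> R -> R) w z :
  c <> 0 -> (forall r, ex_derive P r) -> open_set O ->
  Ck 1 O rho -> Ck 1 O K -> Ck 2 O F -> Ck 2 O A -> Ck 3 O Pi -> O w z ->
  Pi w z <> 0 -> gradPi2 Pi w z <> 0 -> calD c F A Pi Om w z <> 0 ->
  Lap F w z + / Pi w z * (dw Pi w z * dw F w z + dz Pi w z * dz F w z)
  + exp (4 * F w z) / (2 * Pi w z ^ 2) * (dw A w z ^ 2 + dz A w z ^ 2)
  = 4 * PI * G / c ^ 4 * exp (2 * (- F w z + K w z))
    * ((c ^ 2 * rho w z + P (rho w z))
       * (exp (2 * F w z) * (1 + Om w z / c * A w z) ^ 2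
          + exp (- (2 * F w z)) * (Om w z ^ 2 / c ^ 2) * Pi w z ^ 2)
       / calD c F A Pi Om w z
       + 2 * P (rho w z)) ->
  Lap A w z - / Pi w z * (dw Pi w z * dw A w z + dz Pi w z * dz A w z)
  + 4 * (dw F w z * dw A w z + dz F w z * dz A w z)
  = - (16 * PI * G / c ^ 4) * exp (2 * (- F w z + K w z))
    * (c ^ 2 * rho w z + P (rho w z))
    * (exp (- (2 * F w z)) * (Om w z / c) * Pi w z ^ 2 * (1 + Om w z / c * A w z))
    / calD c F A Pi Om w z ->
  (forall x y, O x y ->
     Lap Pi x y = 16 * PI * G / c ^ 4 * exp (2 * (- F x y + K x y)) * P (rho x y) * Pi x y) ->
  euler_dw c P rho F A Pi (Om w z) w z = 0 -> euler_dz c P rho F A Pi (Om w z) w z = 0 ->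
  dz (K1t F A Pi) w z - dw (K3t F A Pi) w z
  = 16 * PI * G / c ^ 4 * exp (2 * (- F w z + K w z)) * P (rho w z) * Pi w z
    * / (dw Pi w z ^ 2 + dz Pi w z ^ 2)
    * ((dw K w z - K1t F A Pi w z) * dz Pi w z - (dz K w z - K3t F A Pi w z) * dw Pi w z).
Proof.
  intros Hc HP HO Hrho HK HF HA HPi Hw HPi0 Hg HD Ha Hb HLap Ew Ez.
  rewrite (dz_K1t O F A Pi w z HO HF HA HPi Hw HPi0 Hg),
    (dw_K3t O F A Pi w z HO HF HA HPi Hw HPi0 Hg).
  eapply curl_K_identity; [exact Hc | exact HPi0 | exact Hg | exact HD | exact Ha | exact Hb
    | exact (HLap w z Hw) | | | exact Ew | exact Ez].
  - exact (dw_Lap_Pi c G P O rho K F Pi w z HP HO Hrho HK (Ck_S_Ck _ _ _ HF) HPi Hw HLap).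
  - exact (dz_Lap_Pi c G P O rho K F Pi w z HP HO Hrho HK (Ck_S_Ck _ _ _ HF) HPi Hw HLap).
Qed.
Theorem proposition5
  (c G : R) (Hc : 0 < c) (HG : 0 < G)
  (* equation of state: P = P(rho), C^1; u = int_0^rho dP/(rho + P/c^2) *)
  (P u : R -> R)
  (HP : forall r, ex_derive P r /\ continuous (Derive P) r)
  (Hu : forall r, 0 < r ->
     is_RInt_gen (fun s => Derive P s / (s + P s / c ^ 2))
                 (at_right 0) (at_point r) (u r))
  (* the domains *)
  (O O1 O2 : R -> R -> Prop)
  (HO : half_plane_domain O)
  (HO1 : plane_domain O1) (HO2 : plane_domain O2)
  (HOU : forall w z, O w z <-> (O1 w z \/ O2 w z))
  (* fields *)
  (rho Om K F A Pi : R -> R -> R)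
  (Hrho : Ck 1 O rho) (Hrho0 : forall w z, O w z -> 0 <= rho w z)
  (HK : Ck 1 O K) (HF : Ck 2 O F) (HA : Ck 2 O A) (HPi : Ck 3 O Pi)
  (HPi0 : forall w z, O w z -> Pi w z <> 0)
  (HgradPi : forall w z, O w z -> dw Pi w z ^ 2 + dz Pi w z ^ 2 <> 0)
  (HD : forall w z, O w z -> 0 < calD c F A Pi Om w z)
  (HOm1 : exists Om0, forall w z, O1 w z -> Om w z = Om0)
  (Hvac : forall w z, O2 w z -> rho w z = 0 /\ P (rho w z) = 0)
  (* (a) *)
  (Ha : forall w z, O w z ->
     Lap F w z
     + / Pi w z * (dw Pi w z * dw F w z + dz Pi w z * dz F w z)
     + exp (4 * F w z) / (2 * Pi w z ^ 2) * (dw A w z ^ 2 + dz A w z ^ 2)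
     = 4 * PI * G / c ^ 4 * exp (2 * (- F w z + K w z))
       * ((c ^ 2 * rho w z + P (rho w z))
          * (exp (2 * F w z) * (1 + Om w z / c * A w z) ^ 2
             + exp (- (2 * F w z)) * (Om w z ^ 2 / c ^ 2) * Pi w z ^ 2)
          / calD c F A Pi Om w z
          + 2 * P (rho w z)))
  (* (b) *)
  (Hb : forall w z, O w z ->
     Lap A w z
     - / Pi w z * (dw Pi w z * dw A w z + dz Pi w z * dz A w z)
     + 4 * (dw F w z * dw A w z + dz F w z * dz A w z)
     = - (16 * PI * G / c ^ 4) * exp (2 * (- F w z + K w z))
       * (c ^ 2 * rho w z + P (rho w z))
       * (exp (- (2 * F w z)) * (Om w z / c) * Pi w z ^ 2
          * (1 + Om w z / c * A w z))
       / calD c F A Pi Om w z)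
  (* (c) *)
  (Hc' : forall w z, O w z ->
     Lap Pi w z
     = 16 * PI * G / c ^ 4 * exp (2 * (- F w z + K w z))
       * P (rho w z) * Pi w z)
  (* (f) *)
  (Hf : exists C, forall w z, O w z -> 0 < rho w z ->
     / 2 * ln (calD c F A Pi Om w z) = - (u (rho w z) / c ^ 2) + C) :
  forall w z, O w z ->
    dz (K1t F A Pi) w z - dw (K3t F A Pi) w z
    = 16 * PI * G / c ^ 4 * exp (2 * (- F w z + K w z))
      * P (rho w z) * Pi w z
      * / (dw Pi w z ^ 2 + dz Pi w z ^ 2)
      * ((dw K w z - K1t F A Pi w z) * dz Pi w z
         - (dz K w z - K3t F A Pi w z) * dw Pi w z).
Proof.
  intros w z Hw.
  destruct HO as [[_ [HOopen _]] _].
  destruct HOm1 as [Om0 HOm0]. destruct Hf as [C HC].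
  assert (HP0 : P 0 = 0).
  { destruct HO2 as [[w2 [z2 Hw2]] _]. destruct (Hvac w2 z2 Hw2) as [Hr HPr].
    rewrite Hr in HPr. exact HPr. }
  destruct (euler_residuals_vanish c G Om0 C P u O O1 O2 rho Om K F A Pi Hc HG HP Hu HOopen HOU
              Hrho HF HA (Ck_S_Ck _ _ _ HPi) Hrho0 HPi0 HD HOm0 Hvac HP0 Ha Hb Hc' HC w z Hw)
    as [Ew Ez].
  apply (curl_K_tilde c G P O rho Om K F A Pi w z (Rgt_not_eq c 0 Hc) (fun r => proj1 (HP r)) HOopen
           Hrho HK HF HA HPi Hw (HPi0 w z Hw) (HgradPi w z Hw) (Rgt_not_eq _ _ (HD w z Hw))
           (Ha w z Hw) (Hb w z Hw) Hc' Ew Ez).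
Qed.
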